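(* Let $a\neq 0$ be real and consider the characteristic equation $$\lambda^{2}-\varepsilon\lambda-\varepsilon a e^{-\lambda\tau}+1=0.$$ For $\varepsilon>0$ satisfying $$0<\varepsilon<\sqrt{2},\qquad \varepsilon|a|<1,\qquad \varepsilon^{2}+4a^{2}>4,\tag{H0}$$ define $$\omega_{1,2}=\omega_{1,2}(\varepsilon)=\frac{1}{\sqrt{2}}\Big(2-\varepsilon^{2}\pm\varepsilon\sqrt{\varepsilon^{2}-4+4a^{2}}\Big)^{1/2}\quad(\omega_1>\omega_2>0),$$ and, for $j=0,1,2,\dots$, $$\tau_{1,2}^{j}=\begin{cases}\dfrac{1}{\omega_{1,2}}\Big(\arccos\big(\tfrac{1-\omega_{1,2}^{2}}{\varepsilon a}\big)+2j\pi\Big), & a>0,\\[2mm] \dfrac{1}{\omega_{1,2}}\Big(2\pi-\arccos\big(\tfrac{1-\omega_{1,2}^{2}}{\varepsilon a}\big)+2j\pi\Big), & a<0.\end{cases}$$ Suppose there is $\varepsilon_0$ satisfying (H0) such that, with these quantities computed at $\varepsilon=\varepsilon_0$, $\tau_{1}^{m}=\tau_{2}^{n}=:\tau_0$ for some $m,n\in\mathbb{N}$. Then at $(\varepsilon,\tau)=(\varepsilon_0,\tau_0)$ the characteristic equation has two pairs of simple purely imaginary roots $\pm i\omega_1$ and $\pm i\omega_2$.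
   Context: This is the characteristic equation at the equilibrium $x=0$ of the delayed van der Pol oscillator $\ddot{x}(t)+\varepsilon(x^{2}(t)-1)\dot{x}(t)+x(t)=\varepsilon f(x(t-\tau))$, where $\varepsilon>0$, $\tau>0$, and $f$ is smooth near $0$ with $f(0)=f''(0)=0$, $f'(0)=a\neq0$. *)

From Stdlib Require Import Reals.
From Coquelicot Require Import Coquelicot.
Open Scope R_scope.

Definition Cexp (z : C) : C :=
  (exp (Re z) * cos (Im z), exp (Re z) * sin (Im z)).

Definition charP (eps a tau : R) (lam : C) : C :=
  (lam * lam - RtoC eps * lam
   - RtoC (eps * a) * Cexp (- (lam * RtoC tau)) + 1)%C.

Definition simple_root (f : C -> C) (z : C) : Prop :=
  f z = 0%C /\ exists l : C, @is_derive C_AbsRing C_NormedModule f z l /\ l <> 0%C.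

Definition omega1 (eps a : R) : R :=
  / sqrt 2 * sqrt (2 - eps ^ 2 + eps * sqrt (eps ^ 2 - 4 + 4 * a ^ 2)).
Definition omega2 (eps a : R) : R :=
  / sqrt 2 * sqrt (2 - eps ^ 2 - eps * sqrt (eps ^ 2 - 4 + 4 * a ^ 2)).

Definition tau_of (eps a w : R) (j : nat) : R :=
  if Rlt_dec 0 a then
    / w * (acos ((1 - w ^ 2) / (eps * a)) + 2 * INR j * PI)
  else
    / w * (2 * PI - acos ((1 - w ^ 2) / (eps * a)) + 2 * INR j * PI).

Definition tau1 (eps a : R) (j : nat) : R := tau_of eps a (omega1 eps a) j.
Definition tau2 (eps a : R) (j : nat) : R := tau_of eps a (omega2 eps a) j.

From Stdlib Require Import Reals Lra Psatz.
From Coquelicot Require Import Coquelicot.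
Open Scope R_scope.

(** At [λ = iω] the characteristic equation splits into [ε a cos ωτ = 1 - ω²] and
    [a sin ωτ = ω].  Eliminating [τ] gives [(1 - ω²)² + ε²ω² = ε²a²], a quadratic in
    [ω²] whose roots are [ω₁²] and [ω₂²]; (H0) makes both of them positive.  For each
    [ω_k] the arccos formula for [τ^j] solves the two trigonometric equations (for
    [a < 0] on the other branch of arccos), so [±iω₁] and [±iω₂] are roots at
    [τ₀ = τ₁^m = τ₂^n].  The derivative [2λ - ε + εaτ e^{-λτ}] vanishes at such a
    root only if [ετ = 2] and [ω² = 1 - ε²/2], i.e. at a double root of the
    quadratic, which is excluded because its discriminant [ε²(ε² - 4 + 4a²)] is
    positive.  Complex differentiability of [e^z] comes from
    [|e^h - 1 - h| ≤ 5|h|²] for [|h| ≤ 1/2]. *)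

Lemma exp_sub_1_sub_id_bound x : x <= /2 -> 0 <= exp x - 1 - x <= 2 * x ^ 2.
Proof.
  intros Hx.
  assert (Hinv : exp x * exp (- x) = 1).
  { rewrite <- exp_plus, Rplus_opp_r; apply exp_0. }
  pose proof (exp_ineq1_le x); pose proof (exp_ineq1_le (- x)).
  assert (Hexp : exp x * (1 - x) <= 1) by nra.
  split; [lra|].
  destruct (Rle_dec 0 x); nra.
Qed.

Lemma one_sub_cos_le y : 1 - cos y <= y ^ 2 / 2.
Proof.
  destruct (Rle_dec (Rabs y) 2) as [Hy|Hy].
  - apply Rabs_le_between in Hy.
    destruct (pre_cos_bound y 0) as [Hcos _]; try lra.
    unfold cos_approx, cos_term in Hcos; simpl in Hcos; lra.
  - pose proof (COS_bound y).
    assert (4 < y ^ 2) by (rewrite <- (pow2_abs y); nra).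
    lra.
Qed.

Lemma sin_sub_id_le_pos y : 0 <= y -> Rabs (sin y - y) <= y ^ 3 / 6.
Proof.
  intros Hy.
  destruct (Rle_dec y 4) as [Hy4|Hy4].
  - destruct (pre_sin_bound y 0) as [Hsin _]; try lra.
    unfold sin_approx, sin_term in Hsin; simpl in Hsin.
    assert (sin y <= y).
    { destruct (Req_dec y 0) as [->|]; [rewrite sin_0; lra|].
      apply Rlt_le, sin_lt_x; lra. }
    apply Rabs_le; lra.
  - pose proof (SIN_bound y).
    apply Rabs_le; nra.
Qed.

Lemma sin_sub_id_le y : Rabs (sin y - y) <= Rabs y ^ 3 / 6.
Proof.
  destruct (Rle_dec 0 y) as [Hy|Hy].
  - rewrite (Rabs_pos_eq y) by lra; now apply sin_sub_id_le_pos.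
  - rewrite (Rabs_left y) by lra.
    replace (sin y - y) with (- (sin (- y) - - y)) by (rewrite sin_neg; ring).
    rewrite Rabs_Ropp; apply sin_sub_id_le_pos; lra.
Qed.

Lemma Cmod_pair_le p q : Cmod (p, q) <= Rabs p + Rabs q.
Proof.
  unfold Cmod; cbn [fst snd].
  rewrite <- (sqrt_pow2 (Rabs p + Rabs q)) by (pose proof (Rabs_pos p); pose proof (Rabs_pos q); lra).
  apply sqrt_le_1_alt.
  rewrite <- (pow2_abs p), <- (pow2_abs q).
  pose proof (Rabs_pos p); pose proof (Rabs_pos q); nra.
Qed.

Lemma Cmod_cos_sin y : Cmod (cos y, sin y) = 1.
Proof.
  unfold Cmod; cbn [fst snd].
  replace (cos y ^ 2 + sin y ^ 2) with 1 by (rewrite <- (sin2_cos2 y); unfold Rsqr; ring).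
  apply sqrt_1.
Qed.

Lemma Cmod_cos_sin_sub_1_le y : Cmod ((cos y, sin y) - 1)%C <= Rabs y.
Proof.
  unfold Cmod; rewrite <- sqrt_Rsqr_abs; apply sqrt_le_1_alt; simpl.
  pose proof (one_sub_cos_le y); pose proof (sin2_cos2 y); unfold Rsqr in *; nra.
Qed.

Lemma Cmod_cos_sin_sub_1_sub_le y :
  Rabs y <= 1 -> Cmod ((cos y, sin y) - 1 - (0, y))%C <= y ^ 2.
Proof.
  intros Hy.
  replace ((cos y, sin y) - 1 - (0, y))%C with (cos y - 1, sin y - y)
    by (unfold Cminus, Cplus, Copp, RtoC; simpl; f_equal; ring).
  eapply Rle_trans; [apply Cmod_pair_le|].
  rewrite (Rabs_minus_sym (cos y)), (Rabs_pos_eq (1 - cos y))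
    by (pose proof (COS_bound y); lra).
  pose proof (one_sub_cos_le y); pose proof (sin_sub_id_le y).
  rewrite <- (pow2_abs y) in *; pose proof (Rabs_pos y); nra.
Qed.

Lemma Cexp_plus u v : Cexp (u + v) = (Cexp u * Cexp v)%C.
Proof.
  destruct u as [u1 u2], v as [v1 v2]; unfold Cexp, Cmult, Cplus; simpl.
  rewrite exp_plus, cos_plus, sin_plus; f_equal; ring.
Qed.

Lemma Cexp_remainder_bound h : Cmod h <= /2 -> Cmod (Cexp h - 1 - h)%C <= 5 * Cmod h ^ 2.
Proof.
  intros Hh.
  pose proof (re_le_Cmod h) as Hx.
  assert (Hy : Rabs (Im h) <= Cmod h).
  { pose proof (Rmax_Cmod h); pose proof (Rmax_r (Rabs (fst h)) (Rabs (snd h))); unfold Im; lra. }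
  destruct h as [x y]; unfold Re, Im in Hx, Hy; simpl in Hx, Hy.
  apply Rabs_le_between in Hx; apply Rabs_le_between in Hy.
  pose proof (exp_sub_1_sub_id_bound x ltac:(lra)) as Hexp.
  pose proof (Cmod_cos_sin y) as Hcis.
  pose proof (Cmod_cos_sin_sub_1_le y) as Hcis1.
  pose proof (Cmod_cos_sin_sub_1_sub_le y ltac:(apply Rabs_le; lra)) as Hcis2.
  set (m := Cmod (x, y)) in *.
  set (E := (cos y, sin y) : C) in *.
  assert (Hsplit : (Cexp (x, y) - 1 - (x, y) =
            RtoC (exp x - 1 - x) * E + RtoC x * (E - 1) + (E - 1 - (0, y)))%C).
  { unfold Cexp, E, RtoC, Cminus, Cplus, Cmult, Copp; simpl; f_equal; ring. }
  rewrite Hsplit.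
  eapply Rle_trans; [apply Cmod_triangle|].
  eapply Rle_trans; [apply Rplus_le_compat_r, Cmod_triangle|].
  rewrite !Cmod_mult, !Cmod_R, Hcis.
  rewrite Rabs_pos_eq by lra.
  assert (Hxy : Rabs x * Cmod (E - 1) <= m ^ 2).
  { assert (Rabs x <= m) by (apply Rabs_le; lra).
    assert (Rabs y <= m) by (apply Rabs_le; lra).
    pose proof (Rabs_pos x); pose proof (Cmod_ge_0 (E - 1)); nra. }
  nra.
Qed.

(* Coquelicot's product and chain rules live on [AbsRing_NormedModule C_AbsRing], which
   is not convertible to the [C_NormedModule] of [simple_root]; the two differ only in
   the linearity witness, see [is_derive_C_NormedModule]. *)
Local Notation is_derive_C := (@is_derive C_AbsRing (AbsRing_NormedModule C_AbsRing)).

Lemma is_derive_C_of_remainder_bound (f : C -> C) (z l : C) (K r : R) :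
  0 < r ->
  (forall h, Cmod h <= r -> Cmod (f (z + h) - f z - h * l)%C <= K * Cmod h ^ 2) ->
  is_derive_C f z l.
Proof.
  intros Hr Hrem; split; [apply is_linear_scal_l|].
  intros x Hx.
  apply (@is_filter_lim_locally_unique _ (AbsRing_NormedModule C_AbsRing)) in Hx; subst x.
  intros eps.
  assert (HK : 0 < Rabs K + 1) by (pose proof (Rabs_pos K); lra).
  assert (Hd : 0 < Rmin r (eps / (Rabs K + 1))).
  { apply Rmin_pos; [lra|]; apply Rdiv_lt_0_compat; [apply cond_pos | lra]. }
  exists (mkposreal _ Hd); intros y Hy.
  change (Cmod (y - z)%C < Rmin r (eps / (Rabs K + 1))) in Hy.
  change (Cmod (f y - f z - (y - z) * l)%C <= eps * Cmod (y - z)%C).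
  set (h := (y - z)%C) in *.
  replace y with (z + h)%C by (unfold h; ring).
  pose proof (Rmin_l r (eps / (Rabs K + 1))); pose proof (Rmin_r r (eps / (Rabs K + 1))).
  pose proof (Hrem h ltac:(lra)) as Hbound.
  assert (Hsmall : (Rabs K + 1) * Cmod h <= eps).
  { rewrite Rmult_comm; apply Rle_div_r; lra. }
  pose proof (Cmod_ge_0 h); pose proof (Rle_abs K).
  nra.
Qed.

Lemma is_derive_Cexp z : is_derive_C Cexp z (Cexp z).
Proof.
  apply (is_derive_C_of_remainder_bound _ _ _ (Cmod (Cexp z) * 5) (/2)); [lra|].
  intros h Hh.
  replace (Cexp (z + h) - Cexp z - h * Cexp z)%C with (Cexp z * (Cexp h - 1 - h))%C
    by (rewrite Cexp_plus; ring).
  rewrite Cmod_mult, Rmult_assoc.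
  apply Rmult_le_compat_l; [apply Cmod_ge_0 | now apply Cexp_remainder_bound].
Qed.

Lemma is_derive_C_NormedModule (f : C -> C) z l :
  is_derive_C f z l -> @is_derive C_AbsRing C_NormedModule f z l.
Proof. intros [_ Hdomin]; split; [apply is_linear_scal_l | exact Hdomin]. Qed.

Lemma is_derive_C_congr (f g : C -> C) (z l l' : C) :
  (forall t, f t = g t) -> l = l' -> is_derive_C f z l -> is_derive_C g z l'.
Proof. intros Hfg <-; apply is_derive_ext, Hfg. Qed.

Local Ltac fold_C_ops :=
  repeat change (plus ?x ?y) with (Cplus x y);
  repeat change (minus ?x ?y) with (Cminus x y);
  repeat change (mult ?x ?y) with (Cmult x y);
  repeat change (scal ?x ?y) with (Cmult x y);
  repeat change (opp ?x) with (Copp x);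
  try change one with (RtoC 1); try change zero with (RtoC 0).

Lemma is_derive_charP eps a tau z :
  @is_derive C_AbsRing C_NormedModule (charP eps a tau) z
    (2 * z - RtoC eps + RtoC (eps * a * tau) * Cexp (- (z * RtoC tau)))%C.
Proof.
  apply is_derive_C_NormedModule.
  assert (Hcomm : forall u v : C_AbsRing, mult u v = mult v u) by (intros; apply Cmult_comm).
  pose proof (@is_derive_id C_AbsRing z) as Hid.
  pose proof (fun c : C => @is_derive_const C_AbsRing (AbsRing_NormedModule C_AbsRing) c z) as Hconst.
  pose proof (is_derive_mult _ _ _ _ _ Hid Hid Hcomm) as Hsq.
  pose proof (is_derive_mult _ _ _ _ _ Hid (Hconst (RtoC eps)) Hcomm) as Hlin.
  pose proof (is_derive_opp _ _ _ (is_derive_mult _ _ _ _ _ Hid (Hconst (RtoC tau)) Hcomm)) as Harg.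
  pose proof (is_derive_comp _ _ _ _ _ (is_derive_Cexp _) Harg) as Hdelay.
  pose proof (is_derive_mult _ _ _ _ _ (Hconst (RtoC (eps * a))) Hdelay Hcomm) as Hdelay_term.
  pose proof (is_derive_plus _ _ _ _ _
                (is_derive_minus _ _ _ _ _ (is_derive_minus _ _ _ _ _ Hsq Hlin) Hdelay_term)
                (Hconst 1%C)) as H.
  cbv beta in H; revert H.
  apply is_derive_C_congr; [intro t; unfold charP |]; fold_C_ops; rewrite ?RtoC_mult; ring.
Qed.

Lemma Cexp_neg_imag_mul w tau :
  Cexp (- ((0, w) * RtoC tau))%C = (cos (w * tau), - sin (w * tau)).
Proof.
  unfold Cexp, Cmult, Copp, RtoC; simpl.
  replace (- (0 * tau - w * 0)) with 0 by ring.
  replace (- (0 * 0 + w * tau)) with (- (w * tau)) by ring.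
  rewrite exp_0, cos_neg, sin_neg; f_equal; ring.
Qed.

Lemma simple_root_charP_imag eps a tau w :
  w <> 0 -> eps * a * cos (w * tau) = 1 - w ^ 2 -> a * sin (w * tau) = w ->
  w ^ 2 <> 1 - eps ^ 2 / 2 ->
  simple_root (charP eps a tau) (0, w).
Proof.
  intros Hw Hcos Hsin Hsimple; split.
  - unfold charP; rewrite Cexp_neg_imag_mul.
    unfold Cmult, Cminus, Cplus, Copp, RtoC; simpl; f_equal; nra.
  - eexists; split; [apply is_derive_charP|].
    rewrite Cexp_neg_imag_mul; unfold Cmult, Cminus, Cplus, Copp, RtoC; simpl.
    intros Hderiv; injection Hderiv as Hre Him.
    assert (Htau : eps * tau = 2).
    { apply (Rmult_eq_reg_l w); [|exact Hw]. nra. }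
    assert (Hre' : tau * (1 - w ^ 2) = eps) by (rewrite <- Hcos; lra).
    apply Hsimple; nra.
Qed.

Lemma tau_of_spec eps a w j :
  eps <> 0 -> a <> 0 -> 0 < w ->
  (1 - w ^ 2) ^ 2 + eps ^ 2 * w ^ 2 = eps ^ 2 * a ^ 2 ->
  eps * a * cos (w * tau_of eps a w j) = 1 - w ^ 2 /\
  a * sin (w * tau_of eps a w j) = w.
Proof.
  intros Heps Ha Hw Hfreq; unfold tau_of.
  assert (Hea : eps * a <> 0) by (apply Rmult_integral_contrapositive; split; assumption).
  set (x := (1 - w ^ 2) / (eps * a)).
  assert (Hx : eps * a * x = 1 - w ^ 2) by (unfold x; field; split; assumption).
  assert (Hx2 : 1 - x² = (w / a)²).
  { apply (Rmult_eq_reg_l ((eps * a) ^ 2)); [|now apply pow_nonzero].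
    transitivity (eps ^ 2 * w ^ 2).
    - replace ((eps * a) ^ 2 * (1 - x²)) with ((eps * a) ^ 2 - (eps * a * x) ^ 2)
        by (unfold Rsqr; ring).
      rewrite Hx, Rpow_mult_distr; lra.
    - unfold Rsqr; field; exact Ha. }
  assert (Hx_range : -1 <= x <= 1).
  { pose proof (Rle_0_sqr (w / a)); unfold Rsqr in *; split; nra. }
  assert (Hsin_acos : Rabs a * sin (acos x) = w).
  { rewrite sin_acos, Hx2, sqrt_Rsqr_abs, Rabs_div, (Rabs_pos_eq w) by lra.
    field; apply Rabs_no_R0, Ha. }
  destruct (Rlt_dec 0 a) as [Hpos|Hneg].
  - replace (w * (/ w * (acos x + 2 * INR j * PI))) with (acos x + 2 * INR j * PI)
      by (field; lra).
    rewrite cos_period, sin_period, cos_acos by exact Hx_range.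
    rewrite <- (Rabs_pos_eq a) at 2 by lra.
    split; assumption.
  - replace (w * (/ w * (2 * PI - acos x + 2 * INR j * PI)))
      with (- acos x + 2 * INR (S j) * PI) by (rewrite S_INR; field; lra).
    rewrite cos_period, sin_period, cos_neg, sin_neg, cos_acos by exact Hx_range.
    rewrite Rabs_left in Hsin_acos by lra.
    split; [exact Hx | lra].
Qed.

Lemma simple_roots_at_tau_of eps a w j :
  eps <> 0 -> a <> 0 -> 0 < w ->
  (1 - w ^ 2) ^ 2 + eps ^ 2 * w ^ 2 = eps ^ 2 * a ^ 2 ->
  w ^ 2 <> 1 - eps ^ 2 / 2 ->
  simple_root (charP eps a (tau_of eps a w j)) (0, w) /\
  simple_root (charP eps a (tau_of eps a w j)) (0, - w).
Proof.
  intros Heps Ha Hw Hfreq Hsimple.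
  destruct (tau_of_spec eps a w j Heps Ha Hw Hfreq) as [Hcos Hsin].
  set (tau := tau_of eps a w j) in *.
  split; apply simple_root_charP_imag.
  - lra.
  - exact Hcos.
  - exact Hsin.
  - exact Hsimple.
  - lra.
  - rewrite Ropp_mult_distr_l_reverse, cos_neg, Hcos; ring.
  - rewrite Ropp_mult_distr_l_reverse, sin_neg; lra.
  - replace ((- w) ^ 2) with (w ^ 2) by ring; exact Hsimple.
Qed.

Lemma omega_spec eps a d :
  0 < 2 - eps ^ 2 + d -> d ^ 2 = eps ^ 2 * (eps ^ 2 - 4 + 4 * a ^ 2) -> d <> 0 ->
  let w := / sqrt 2 * sqrt (2 - eps ^ 2 + d) in
  0 < w /\ (1 - w ^ 2) ^ 2 + eps ^ 2 * w ^ 2 = eps ^ 2 * a ^ 2 /\ w ^ 2 <> 1 - eps ^ 2 / 2.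
Proof.
  intros Hpos Hd Hd0 w.
  assert (Hsqrt2 : 0 < sqrt 2) by (apply sqrt_lt_R0; lra).
  assert (Hw2 : w ^ 2 = (2 - eps ^ 2 + d) / 2).
  { unfold w; rewrite Rpow_mult_distr, pow_inv, !pow2_sqrt by lra; field. }
  split; [|split].
  - apply Rmult_lt_0_compat; [now apply Rinv_0_lt_compat | now apply sqrt_lt_R0].
  - rewrite Hw2; nra.
  - rewrite Hw2; lra.
Qed.

Lemma omega2_radicand_pos eps a :
  0 < eps -> eps ^ 2 < 2 -> eps ^ 2 * a ^ 2 < 1 -> 0 <= eps ^ 2 - 4 + 4 * a ^ 2 ->
  0 < 2 - eps ^ 2 - eps * sqrt (eps ^ 2 - 4 + 4 * a ^ 2).
Proof.
  intros Heps Heps2 Hea Hdisc.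
  set (s := sqrt (eps ^ 2 - 4 + 4 * a ^ 2)).
  assert (Hs : 0 <= s) by apply sqrt_pos.
  assert (Hs2 : s ^ 2 = eps ^ 2 - 4 + 4 * a ^ 2) by (apply pow2_sqrt, Hdisc).
  (* Positive product and positive sum force both radicands to be positive. *)
  assert (Hprod : (2 - eps ^ 2 - eps * s) * (2 - eps ^ 2 + eps * s) = 4 * (1 - eps ^ 2 * a ^ 2)).
  { transitivity ((2 - eps ^ 2) ^ 2 - eps ^ 2 * s ^ 2); [ring|]. rewrite Hs2; ring. }
  assert (0 <= eps * s) by (apply Rmult_le_pos; lra).
  nra.
Qed.

Theorem lemma1 (a eps0 : R) (m n : nat) :
  a <> 0 ->
  0 < eps0 -> eps0 < sqrt 2 -> eps0 * Rabs a < 1 ->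
  eps0 ^ 2 + 4 * a ^ 2 > 4 ->
  tau1 eps0 a m = tau2 eps0 a n ->
  let tau0 := tau1 eps0 a m in
  let w1 := omega1 eps0 a in
  let w2 := omega2 eps0 a in
  0 < w2 < w1 /\
  simple_root (charP eps0 a tau0) (0, w1) /\
  simple_root (charP eps0 a tau0) (0, - w1) /\
  simple_root (charP eps0 a tau0) (0, w2) /\
  simple_root (charP eps0 a tau0) (0, - w2).
Proof.
  intros Ha Heps Heps_sqrt2 Heps_a Hdisc Htau tau0 w1 w2.
  set (s := sqrt (eps0 ^ 2 - 4 + 4 * a ^ 2)).
  assert (Hs : 0 < s) by (apply sqrt_lt_R0; lra).
  assert (Hd : (eps0 * s) ^ 2 = eps0 ^ 2 * (eps0 ^ 2 - 4 + 4 * a ^ 2))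
    by (rewrite Rpow_mult_distr; unfold s; rewrite pow2_sqrt by lra; reflexivity).
  assert (Hes : 0 < eps0 * s) by (apply Rmult_lt_0_compat; assumption).
  assert (Heps2 : eps0 ^ 2 < 2).
  { rewrite <- (pow2_sqrt 2) by lra; nra. }
  assert (Hea : eps0 ^ 2 * a ^ 2 < 1).
  { rewrite <- (pow2_abs a), <- Rpow_mult_distr.
    assert (0 <= eps0 * Rabs a) by (apply Rmult_le_pos; [lra | apply Rabs_pos]).
    nra. }
  pose proof (omega2_radicand_pos eps0 a Heps Heps2 Hea ltac:(lra)) as Hrad2.
  fold s in Hrad2.
  destruct (omega_spec eps0 a (eps0 * s) ltac:(lra) Hd ltac:(lra))
    as [Hw1 [Hfreq1 Hsimple1]].
  destruct (omega_spec eps0 a (- (eps0 * s)) Hrad2 ltac:(rewrite <- Hd; ring)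
              ltac:(lra)) as [Hw2 [Hfreq2 Hsimple2]].
  assert (Hw21 : w2 < w1).
  { apply Rmult_lt_compat_l; [apply Rinv_0_lt_compat, sqrt_lt_R0; lra|].
    apply sqrt_lt_1; fold s; lra. }
  destruct (simple_roots_at_tau_of eps0 a w1 m ltac:(lra) Ha Hw1 Hfreq1 Hsimple1) as [R1 R1'].
  destruct (simple_roots_at_tau_of eps0 a w2 n ltac:(lra) Ha Hw2 Hfreq2 Hsimple2) as [R2 R2'].
  change (tau_of eps0 a w2 n) with (tau2 eps0 a n) in R2, R2'; rewrite <- Htau in R2, R2'.
  exact (conj (conj Hw2 Hw21) (conj R1 (conj R1' (conj R2 R2')))).
Qed.
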